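(* Let $\mathbf{A}$ be a stably free ideal domain (resp. a semistably free ideal domain) and let $S\subseteq\mathbf{A}$ be a two-sided denominator set with $0\notin S$. Then the localization $S^{-1}\mathbf{A}$ is a stably free ideal domain (resp. a semistably free ideal domain).
   Context: A module $P$ over a ring $\mathbf{A}$ is stably free if there exist integers $q,r\ge 0$ with $P\oplus \mathbf{A}^{q}\cong \mathbf{A}^{q+r}$. A stably free ideal domain is a (left and right) Noetherian domain in which every left ideal and every right ideal is stably free. A semistably free ideal domain is a (left and right) Ore domain in which every finitely generated left ideal and every finitely generated right ideal is stably free. A two-sided denominator set is a multiplicatively closed subset $S$ (containing $1$) satisfying the left and right Ore conditions and left and right reversibility, so that the classical localization $S^{-1}\mathbf{A}=\mathbf{A}S^{-1}$ exists. *)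

From HB Require Import structures.
From mathcomp Require Import all_boot all_order all_algebra.
Set Implicit Arguments. Unset Strict Implicit. Unset Printing Implicit Defensive.
Import GRing.Theory.
Local Open Scope ring_scope.

(* Scalar actions of a ring on itself: left multiplication (left modules /
   left ideals) and right multiplication (right modules / right ideals). *)
Definition lmul (A : nzRingType) (a x : A) : A := a * x.
Definition rmul (A : nzRingType) (a x : A) : A := x * a.

Definition is_ideal (A : nzRingType) (act : A -> A -> A) (I : A -> Prop) : Prop :=
  I 0 /\ (forall x y, I x -> I y -> I (x + y)) /\ (forall a x, I x -> I (act a x)).

Definition fin_gen (A : nzRingType) (act : A -> A -> A) (I : A -> Prop) : Prop :=
  exists (n : nat) (g : 'I_n -> A),
    forall x, I x <-> exists c : 'I_n -> A, x = \sum_(i < n) act (c i) (g i).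

(* Stably free: I (+) A^q ~= A^(q+r) as modules for the action [act]
   (A^n = row vectors 'rV_n with entrywise action). *)
Definition stably_free (A : nzRingType) (act : A -> A -> A) (I : A -> Prop) : Prop :=
  exists (q r : nat) (f : A -> 'rV[A]_q -> 'rV[A]_(q + r)),
    (forall x v y w, I x -> I y -> f (x + y) (v + w) = f x v + f y w) /\
    (forall a x v, I x -> f (act a x) (map_mx (act a) v) = map_mx (act a) (f x v)) /\
    (forall x v y w, I x -> I y -> f x v = f y w -> x = y /\ v = w) /\
    (forall u, exists x v, I x /\ f x v = u).

Definition is_domain (A : nzRingType) : Prop :=
  forall a b : A, a * b = 0 -> a = 0 \/ b = 0.

Definition noetherian (A : nzRingType) (act : A -> A -> A) : Prop :=
  forall I : nat -> A -> Prop,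
    (forall n, is_ideal act (I n)) ->
    (forall n x, I n x -> I n.+1 x) ->
    exists N, forall n x, (N <= n)%N -> (I n x <-> I N x).

Definition left_ore (A : nzRingType) : Prop :=
  forall a s : A, s != 0 -> exists b t : A, t != 0 /\ t * a = b * s.
Definition right_ore (A : nzRingType) : Prop :=
  forall a s : A, s != 0 -> exists b t : A, t != 0 /\ a * t = s * b.

Definition stably_free_ideal_domain (A : nzRingType) : Prop :=
  is_domain A /\ noetherian (@lmul A) /\ noetherian (@rmul A) /\
  (forall I, is_ideal (@lmul A) I -> stably_free (@lmul A) I) /\
  (forall I, is_ideal (@rmul A) I -> stably_free (@rmul A) I).

Definition semistably_free_ideal_domain (A : nzRingType) : Prop :=
  is_domain A /\ left_ore A /\ right_ore A /\
  (forall I, is_ideal (@lmul A) I -> fin_gen (@lmul A) I -> stably_free (@lmul A) I) /\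
  (forall I, is_ideal (@rmul A) I -> fin_gen (@rmul A) I -> stably_free (@rmul A) I).

Definition two_sided_denominator_set (A : nzRingType) (S : A -> Prop) : Prop :=
  S 1 /\ (forall s t, S s -> S t -> S (s * t)) /\
  (forall a s, S s -> exists b t, S t /\ a * t = s * b) /\
  (forall a s, S s -> exists b t, S t /\ t * a = b * s) /\
  (forall a s, S s -> s * a = 0 -> exists t, S t /\ a * t = 0) /\
  (forall a s, S s -> a * s = 0 -> exists t, S t /\ t * a = 0).

(* phi : A -> B is the classical (two-sided) localization S^{-1}A = AS^{-1}:
   it is both a right and a left ring of fractions of A with respect to S. *)
Definition is_localization (A B : nzRingType) (S : A -> Prop) (phi : A -> B) : Prop :=
  (forall s, S s -> exists u : B, u * phi s = 1 /\ phi s * u = 1) /\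
  (forall b : B, exists a s, S s /\ b * phi s = phi a) /\
  (forall b : B, exists a s, S s /\ phi s * b = phi a) /\
  (forall a, phi a = 0 <-> exists s, S s /\ a * s = 0) /\
  (forall a, phi a = 0 <-> exists s, S s /\ s * a = 0).

(* Then phi is injective
   and every element of B is a left fraction phi(s)^-1 phi(a) as well as a
   right fraction phi(a) phi(s)^-1.  We work with an abstract injective
   ring map phi having left fractions (and, where needed, right fractions):
   - B is a domain, ACC on left ideals and the left Ore condition pass from A
     to B by contracting ideals along phi;
   - if I (+) A^q ~ A^(q+r) for the contraction I of a left ideal J of B,
     the isomorphism f extends to J (+) B^q ~ B^(q+r) by
     (x, v) |-> phi(s)^-1 phi(f(a, w)) whenever phi(s) x = phi a and
     phi(s) v = phi w; common denominators make this well defined.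
     Finitely generated J are handled through the ideal of A generated by
     numerators of the generators of J.
   The right-hand statements are the left-hand ones for the converse rings
   A^c, B^c, and the main theorem combines both sides. *)
From HB Require Import structures.
From mathcomp Require Import all_boot all_order all_algebra.
From Stdlib Require Import ClassicalEpsilon.
Set Implicit Arguments. Unset Strict Implicit. Unset Printing Implicit Defensive.
Import GRing.Theory.
Local Open Scope ring_scope.

Lemma lmulZ (R : nzRingType) m n a (v : 'M[R]_(m, n)) : map_mx (@lmul R a) v = a *: v.
Proof. by apply/matrixP => i j; rewrite !mxE. Qed.

Lemma idealD (R : nzRingType) (act : R -> R -> R) (I : R -> Prop) x y :
  is_ideal act I -> I x -> I y -> I (x + y).
Proof. by case=> _ [+ _]; apply. Qed.

Lemma idealM (R : nzRingType) (act : R -> R -> R) (I : R -> Prop) a x :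
  is_ideal act I -> I x -> I (act a x).
Proof. by case=> _ [_ +]; apply. Qed.

Section LeftFractions.
Variables (A B : nzRingType) (S : A -> Prop) (phi : A -> B).
Hypothesis phiD : {morph phi : x y / x + y}.
Hypothesis phiM : {morph phi : x y / x * y}.
Hypothesis phi_inj0 : forall a, phi a = 0 -> a = 0.
Hypothesis S1 : S 1.
Hypothesis S_mul : forall s t, S s -> S t -> S (s * t).
Hypothesis S_ore : forall a s, S s -> exists b t, S t /\ t * a = b * s.
Hypothesis S_unit : forall s, S s -> exists u, u * phi s = 1 /\ phi s * u = 1.
Hypothesis left_frac : forall b, exists a s, S s /\ phi s * b = phi a.
Hypothesis right_frac : forall b, exists a s, S s /\ b * phi s = phi a.

Lemma phi0 : phi 0 = 0.
Proof. by apply: (addrI (phi 0)); rewrite -phiD !addr0. Qed.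

Lemma phiN x : phi (- x) = - phi x.
Proof. by apply: (addIr (phi x)); rewrite -phiD !addNr phi0. Qed.

Lemma phi_inj : injective phi.
Proof.
move=> x y e; apply/eqP; rewrite -subr_eq0; apply/eqP; apply: phi_inj0.
by rewrite phiD phiN e subrr.
Qed.

Lemma phi_sum n (c : 'I_n -> A) : phi (\sum_(i < n) c i) = \sum_(i < n) phi (c i).
Proof. exact: (big_morph phi phiD phi0). Qed.

(* A chosen two-sided inverse of phi s, meaningful when S s. *)
Definition den_inv (s : A) : B :=
  epsilon (inhabits 0) (fun u => u * phi s = 1 /\ phi s * u = 1).

Lemma den_invP s : S s -> den_inv s * phi s = 1 /\ phi s * den_inv s = 1.
Proof. by move=> hs; exact: epsilon_spec (S_unit hs). Qed.

Lemma den_invL s : S s -> den_inv s * phi s = 1.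
Proof. by case/den_invP. Qed.

Lemma den_invR s : S s -> phi s * den_inv s = 1.
Proof. by case/den_invP. Qed.

Lemma frac_eq s a x : S s -> phi s * x = phi a -> x = den_inv s * phi a.
Proof. by move=> hs <-; rewrite mulrA den_invL // mul1r. Qed.

Lemma frac_eqZ m n s (v M : 'M[B]_(m, n)) : S s -> phi s *: v = M -> v = den_inv s *: M.
Proof. by move=> hs <-; rewrite scalerA den_invL // scale1r. Qed.

Lemma cancel_denR s y : S s -> y * phi s = 0 -> y = 0.
Proof. by move=> hs e; rewrite -[y]mulr1 -(den_invR hs) mulrA e mul0r. Qed.

Lemma common_multiple s1 s2 :
  S s1 -> S s2 -> exists c1 c2, S (c1 * s1) /\ c1 * s1 = c2 * s2.
Proof.
move=> h1 h2; have [b [t [ht e]]] := S_ore s1 h2.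
by exists t, b; split => //; apply: S_mul.
Qed.

Lemma num_scale s x a c : phi s * x = phi a -> phi (c * s) * x = phi (c * a).
Proof. by move=> e; rewrite !phiM -mulrA e. Qed.

Lemma den_inv_scale c s : S s -> S (c * s) -> den_inv (c * s) * phi c = den_inv s.
Proof.
move=> hs hcs.
by rewrite -[LHS]mulr1 -(den_invR hs) mulrA -(mulrA _ (phi c)) -phiM den_invL // mul1r.
Qed.

Lemma seq_denominator (l : seq B) :
  exists s, S s /\ forall b, b \in l -> exists a, phi s * b = phi a.
Proof.
elim: l => [|b l [s1 [h1 IH]]]; first by exists 1; split => // b.
have [a0 [s0 [hs0 e0]]] := left_frac b.
have [c0 [c1 [hc e]]] := common_multiple hs0 h1.
exists (c0 * s0); split => // b'; rewrite inE => /orP [/eqP -> | hb'].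
  by exists (c0 * a0); apply: num_scale.
have [a ha] := IH _ hb'; exists (c1 * a); rewrite e; exact: num_scale.
Qed.

Lemma family_denominator n (g : 'I_n -> B) :
  exists s (e : 'I_n -> A), S s /\ forall i, phi s * g i = phi (e i).
Proof.
have [s [hs H]] := seq_denominator [seq g i | i <- enum 'I_n].
have : forall i, exists a, phi s * g i = phi a.
  by move=> i; apply: H; apply: map_f; rewrite mem_enum.
by move=> /fin_all_exists [e he]; exists s, e.
Qed.

Lemma row_denominator n (u : 'rV[B]_n) : exists s m, S s /\ phi s *: u = map_mx phi m.
Proof.
have [s [e [hs he]]] := family_denominator (fun j => u 0 j).
exists s, (\row_j e j); split => //; apply/matrixP => i j.
by rewrite (ord1 i) !mxE he.
Qed.

Lemma phi_mxD m n (v w : 'M[A]_(m, n)) :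
  map_mx phi (v + w) = map_mx phi v + map_mx phi w.
Proof. by apply/matrixP => i j; rewrite !mxE phiD. Qed.

Lemma phi_mxZ m n a (v : 'M[A]_(m, n)) : map_mx phi (a *: v) = phi a *: map_mx phi v.
Proof. by apply/matrixP => i j; rewrite !mxE phiM. Qed.

Lemma phi_mx_inj m n : injective (map_mx phi : 'M[A]_(m, n) -> 'M[B]_(m, n)).
Proof.
move=> v w e; apply/matrixP => i j; apply: phi_inj.
by move/matrixP: e => /(_ i j); rewrite !mxE.
Qed.

(* B is a domain: clear right denominators and use injectivity of phi. *)
Lemma frac_domain : is_domain A -> is_domain B.
Proof.
move=> Adom b1 b2 e.
have [a1 [s1 [hs1 e1]]] := right_frac b1.
have [c [t [ht et]]] := right_frac (den_inv s1 * b2).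
have : phi (a1 * c) = 0.
  by rewrite phiM -e1 -et !mulrA -(mulrA b1) den_invR // mulr1 e mul0r.
move/phi_inj0/Adom => [a10|c0].
  by left; apply: (cancel_denR hs1); rewrite e1 a10 phi0.
right; have y0 : den_inv s1 * b2 = 0 by apply: (cancel_denR ht); rewrite et c0 phi0.
by rewrite -[b2]mul1r -(den_invR hs1) -mulrA y0 mulr0.
Qed.

Lemma contraction_ideal (J : B -> Prop) :
  is_ideal (@lmul B) J -> is_ideal (@lmul A) (fun a => J (phi a)).
Proof.
move=> HJ; split; first by rewrite phi0; case: HJ.
split; first by move=> x y hx hy; rewrite phiD; apply: idealD HJ hx hy.
by move=> a x hx; rewrite /lmul phiM; apply: idealM HJ hx.
Qed.

(* A left ideal of B is determined by its contraction. *)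
Lemma ideal_frac (J : B -> Prop) s x a :
  is_ideal (@lmul B) J -> S s -> phi s * x = phi a -> J x <-> J (phi a).
Proof.
move=> HJ hs e; split => h; first by rewrite -e; apply: idealM HJ h.
by rewrite (frac_eq hs e); apply: idealM HJ h.
Qed.

Lemma frac_noetherian : noetherian (@lmul A) -> noetherian (@lmul B).
Proof.
move=> HN J HJ Hmono.
have [N HNn] := HN (fun n a => J n (phi a)) (fun n => contraction_ideal (HJ n))
  (fun n x => Hmono n (phi x)).
exists N => n x hn; have [a [s [hs e]]] := left_frac x.
apply: (iff_trans (ideal_frac (HJ n) hs e)); apply: (iff_trans (HNn n a hn)).
exact: iff_sym (ideal_frac (HJ N) hs e).
Qed.

(* The left Ore condition passes to B: write s = phi s' phi(tau)^-1 and
   a = phi(sigma)^-1 phi a', then apply the Ore condition to a' tau, s'. *)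
Lemma frac_left_ore : left_ore A -> left_ore B.
Proof.
move=> HO a s hs0.
have [s' [tau [htau etau]]] := right_frac s.
have [a' [sig [hsig esig]]] := left_frac a.
have s'0 : s' != 0.
  apply: contra_neq hs0 => z; apply: (cancel_denR htau); by rewrite etau z phi0.
have [b'' [t'' [ht'' e'']]] := HO (a' * tau) s' s'0.
exists (phi b''), (phi t'' * phi sig); split.
  apply: contra_neq ht'' => z; apply: phi_inj0; exact: (cancel_denR hsig z).
have -> : s = phi s' * den_inv tau by rewrite -etau -mulrA den_invR // mulr1.
rewrite -mulrA esig [in RHS]mulrA -[in RHS]phiM -e'' !phiM.
by rewrite -!mulrA den_invR // mulr1.
Qed.

Section IdealTransfer.
Variables (I : A -> Prop) (J : B -> Prop).
Hypothesis I_ideal : is_ideal (@lmul A) I.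
Hypothesis J_ideal : is_ideal (@lmul B) J.
Hypothesis I_to_J : forall a, I a -> J (phi a).
Hypothesis J_to_I : forall x, J x -> exists s a, S s /\ I a /\ phi s * x = phi a.

Section Extension.
Variables (q r : nat) (f : A -> 'rV[A]_q -> 'rV[A]_(q + r)).
Hypothesis fD : forall x v y w, I x -> I y -> f (x + y) (v + w) = f x v + f y w.
Hypothesis f_lin : forall a x v, I x ->
  f (lmul a x) (map_mx (lmul a) v) = map_mx (lmul a) (f x v).
Hypothesis f_inj : forall x v y w, I x -> I y -> f x v = f y w -> x = y /\ v = w.
Hypothesis f_surj : forall u, exists x v, I x /\ f x v = u.

Lemma fZ a x v : I x -> f (a * x) (a *: v) = a *: f x v.
Proof. by move=> hx; rewrite -!lmulZ; exact: f_lin. Qed.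

Definition represents (x : B) (v : 'rV[B]_q) (s a : A) (w : 'rV[A]_q) : Prop :=
  [/\ S s, I a, phi s * x = phi a & phi s *: v = map_mx phi w].

Lemma represents_scale x v s a w c :
  represents x v s a w -> S (c * s) -> represents x v (c * s) (c * a) (c *: w).
Proof.
case=> _ Ia ex ev hcs; split => //; first exact: idealM I_ideal Ia.
  exact: num_scale.
by rewrite phiM -scalerA ev phi_mxZ.
Qed.

Lemma represents_unique x v s a w a' w' :
  represents x v s a w -> represents x v s a' w' -> a = a' /\ w = w'.
Proof.
case=> _ _ e1 e2 [_ _ e1' e2']; split; first by apply: phi_inj; rewrite -e1 -e1'.
by apply: phi_mx_inj; rewrite -e2 -e2'.
Qed.

Lemma represents_exists x v : J x -> exists s a w, represents x v s a w.
Proof.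
move=> hx; have [s0 [a0 [hs0 [Ia0 e0]]]] := J_to_I hx.
have [s1 [m1 [hs1 e1]]] := row_denominator v.
have [c0 [c1 [hc e]]] := common_multiple hs0 hs1.
exists (c0 * s0), (c0 * a0), (c1 *: m1); split => //.
- exact: idealM I_ideal Ia0.
- exact: num_scale.
- by rewrite e phiM -scalerA e1 phi_mxZ.
Qed.

Lemma represents_common x v s a w y u s' a' w' :
  represents x v s a w -> represents y u s' a' w' ->
  exists c c', [/\ S (c * s), c * s = c' * s',
    represents x v (c * s) (c * a) (c *: w) &
    represents y u (c * s) (c' * a') (c' *: w')].
Proof.
move=> r1 r2; have [[hs _ _ _] [hs' _ _ _]] := (r1, r2).
have [c [c' [hc e]]] := common_multiple hs hs'.
exists c, c'; split => //; first exact: represents_scale.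
by rewrite e; apply: represents_scale => //; rewrite -e.
Qed.

Definition value (s a : A) (w : 'rV[A]_q) : 'rV[B]_(q + r) :=
  den_inv s *: map_mx phi (f a w).

Lemma value_scale s a w c :
  I a -> S s -> S (c * s) -> value (c * s) (c * a) (c *: w) = value s a w.
Proof. by move=> Ia hs hcs; rewrite /value fZ // phi_mxZ scalerA den_inv_scale. Qed.

Lemma value_indep x v s a w s' a' w' :
  represents x v s a w -> represents x v s' a' w' -> value s a w = value s' a' w'.
Proof.
move=> r1 r2; have [c [c' [hc e R1 R2]]] := represents_common r1 r2.
have hc' : S (c' * s') by rewrite -e.
have [ea ew] := represents_unique R1 R2.
have [[hs Ia _ _] [hs' Ia' _ _]] := (r1, r2).
rewrite -(value_scale w Ia hs hc) -(value_scale w' Ia' hs' hc').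
by rewrite ea ew e.
Qed.

Definition ext (x : B) (v : 'rV[B]_q) : 'rV[B]_(q + r) :=
  let p := epsilon (inhabits ((1, (0, 0)) : A * (A * 'rV[A]_q)))
    (fun p => represents x v p.1 p.2.1 p.2.2) in value p.1 p.2.1 p.2.2.

Lemma ext_value x v s a w : represents x v s a w -> ext x v = value s a w.
Proof.
move=> hr; rewrite /ext; set P := fun p => _.
have : P (epsilon (inhabits (1, (0, 0))) P) by apply: epsilon_spec; exists (s, (a, w)).
by move/(value_indep hr) ->.
Qed.

Lemma represents_add x v y u s a w a' w' :
  represents x v s a w -> represents y u s a' w' ->
  represents (x + y) (v + u) s (a + a') (w + w').
Proof.
case=> hs Ia e1 e2 [_ Ia' e1' e2']; split => //; first exact: idealD I_ideal Ia Ia'.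
  by rewrite mulrDr e1 e1' phiD.
by rewrite scalerDr e2 e2' phi_mxD.
Qed.

Lemma ext_add x v y u : J x -> J y -> ext (x + y) (v + u) = ext x v + ext y u.
Proof.
move=> /(@represents_exists _ v) [s [a [w r1]]] /(@represents_exists _ u) [s' [a' [w' r2]]].
have [c [c' [_ _ R1 R2]]] := represents_common r1 r2.
rewrite (ext_value (represents_add R1 R2)) (ext_value R1) (ext_value R2).
by rewrite /value fD ?phi_mxD ?scalerDr //; [case: R1 | case: R2].
Qed.

Lemma represents_mul x v s a w b t e :
  represents x v s a w -> S t -> phi t * (b * den_inv s) = phi e ->
  represents (b * x) (b *: v) t (e * a) (e *: w).
Proof.
case=> hs Ia e1 e2 ht et; split => //; first exact: idealM I_ideal Ia.
  by rewrite phiM -e1 -et -!mulrA (mulrA (den_inv s)) den_invL // mul1r.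
by rewrite phi_mxZ -e2 -et !scalerA -!mulrA den_invL // mulr1.
Qed.

Lemma ext_scale b x v : J x -> ext (b * x) (b *: v) = b *: ext x v.
Proof.
move=> /(@represents_exists _ v) [s [a [w hr]]].
have [e [t [ht et]]] := left_frac (b * den_inv s).
rewrite (ext_value (represents_mul hr ht et)) (ext_value hr) /value.
by rewrite fZ; [rewrite phi_mxZ !scalerA -(frac_eq ht et) | case: hr].
Qed.

Lemma ext_inj x v y u : J x -> J y -> ext x v = ext y u -> x = y /\ v = u.
Proof.
move=> /(@represents_exists _ v) [s [a [w r1]]] /(@represents_exists _ u) [s' [a' [w' r2]]].
have [c [c' [hc _ R1 R2]]] := represents_common r1 r2.
rewrite (ext_value R1) (ext_value R2) /value => E.
have /phi_mx_inj : map_mx phi (f (c * a) (c *: w)) = map_mx phi (f (c' * a') (c' *: w')).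
  by rewrite -[LHS]scale1r -(den_invR hc) -scalerA E scalerA den_invR // scale1r.
case: R1 R2 => [_ Ia f1 f2] [_ Ia' f1' f2'] /(f_inj Ia Ia') [ea ew].
split; first by rewrite (frac_eq hc f1) (frac_eq hc f1') ea.
by rewrite (frac_eqZ hc f2) (frac_eqZ hc f2') ew.
Qed.

Lemma ext_surj u : exists x v, J x /\ ext x v = u.
Proof.
have [s [m [hs e]]] := row_denominator u.
have [a [w [Ia efm]]] := f_surj m.
have hr : represents (den_inv s * phi a) (den_inv s *: map_mx phi w) s a w.
  by split; rewrite // ?mulrA ?scalerA den_invR // ?mul1r ?scale1r.
exists (den_inv s * phi a), (den_inv s *: map_mx phi w); split.
  exact: idealM J_ideal (I_to_J Ia).
by rewrite (ext_value hr) /value efm -e scalerA den_invL // scale1r.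
Qed.

Lemma ext_stably_free : stably_free (@lmul B) J.
Proof.
exists q, r, ext; split; [exact: ext_add | split; [|split]].
- by move=> b x v hx; rewrite !lmulZ; exact: ext_scale.
- exact: ext_inj.
- exact: ext_surj.
Qed.

End Extension.

Lemma stably_free_transfer : stably_free (@lmul A) I -> stably_free (@lmul B) J.
Proof. by case=> q [r [f [fD [fL [fI fS]]]]]; exact: ext_stably_free fD fL fI fS. Qed.

End IdealTransfer.

(* Every left ideal of B is stably free if every left ideal of A is: use
   the contraction of J. *)
Lemma frac_stably_free :
  (forall I, is_ideal (@lmul A) I -> stably_free (@lmul A) I) ->
  forall J, is_ideal (@lmul B) J -> stably_free (@lmul B) J.
Proof.
move=> H J HJ; apply: (@stably_free_transfer (fun a => J (phi a))) => //.
- exact: contraction_ideal.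
- move=> x hx; have [a [s [hs e]]] := left_frac x; exists s, a; split => //.
  by split => //; exact: (ideal_frac HJ hs e).1.
- by apply: H; exact: contraction_ideal.
Qed.

Definition generated (n : nat) (g : 'I_n -> A) (x : A) : Prop :=
  exists c : 'I_n -> A, x = \sum_(i < n) lmul (c i) (g i).

Lemma generated_ideal n (g : 'I_n -> A) : is_ideal (@lmul A) (generated g).
Proof.
split; first by exists (fun=> 0); rewrite big1 // => i _; rewrite /lmul mul0r.
split.
  move=> x y [c ->] [d ->]; exists (fun i => c i + d i).
  by rewrite -big_split /=; apply: eq_bigr => i _; rewrite /lmul mulrDl.
move=> b x [c ->]; exists (fun i => b * c i).
by rewrite /lmul mulr_sumr; apply: eq_bigr => i _; rewrite mulrA.
Qed.

(* A finitely generated left ideal J = B g_1 + ... + B g_n of B corresponds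
   to the ideal of A generated by numerators a_i of g_i = phi(s_i)^-1 phi a_i. *)
Lemma frac_semistably_free :
  (forall I, is_ideal (@lmul A) I -> fin_gen (@lmul A) I -> stably_free (@lmul A) I) ->
  forall J, is_ideal (@lmul B) J -> fin_gen (@lmul B) J -> stably_free (@lmul B) J.
Proof.
move=> H J HJ [n [g Hg]].
have /fin_all_exists [sa hsa] : forall i, exists p : A * A, S p.1 /\ phi p.1 * g i = phi p.2.
  by move=> i; have [a [s [hs e]]] := left_frac (g i); exists (s, a).
apply: (@stably_free_transfer (generated (fun i => (sa i).2)) J) => //.
- exact: generated_ideal.
- move=> x [c ->]; apply/(Hg _).2; exists (fun i => phi (c i) * phi (sa i).1).
  rewrite phi_sum; apply: eq_bigr => i _; rewrite /lmul phiM -mulrA.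
  by case: (hsa i) => _ ->.
- move=> x /(Hg _).1 [c ex].
  have [s [e [hs he]]] := family_denominator (fun i => c i * den_inv (sa i).1).
  exists s, (\sum_(i < n) lmul (e i) (sa i).2); split => //; split; first by exists e.
  rewrite ex mulr_sumr phi_sum; apply: eq_bigr => i _; rewrite /lmul phiM -he.
  case: (hsa i) => hsi <-.
  by rewrite -!mulrA (mulrA (den_inv _)) den_invL // mul1r.
- by apply: H; [exact: generated_ideal | exists n, (fun i => (sa i).2)].
Qed.

Lemma left_fraction_transfer :
  (noetherian (@lmul A) -> noetherian (@lmul B)) /\
  (left_ore A -> left_ore B) /\
  ((forall I, is_ideal (@lmul A) I -> stably_free (@lmul A) I) ->
     forall J, is_ideal (@lmul B) J -> stably_free (@lmul B) J) /\
  ((forall I, is_ideal (@lmul A) I -> fin_gen (@lmul A) I -> stably_free (@lmul A) I) ->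
     forall J, is_ideal (@lmul B) J -> fin_gen (@lmul B) J -> stably_free (@lmul B) J).
Proof.
split; first exact: frac_noetherian.
split; first exact: frac_left_ore.
by split; [exact: frac_stably_free | exact: frac_semistably_free].
Qed.

End LeftFractions.

Section Localization.
Variables (A : nzRingType) (S : A -> Prop) (B : nzRingType) (phi : {rmorphism A -> B}).
Hypothesis hS : two_sided_denominator_set S.
Hypothesis h0 : ~ S 0.
Hypothesis hloc : is_localization S phi.
Hypothesis Adom : is_domain A.

Lemma localization_inj0 a : phi a = 0 -> a = 0.
Proof.
case: hloc => _ [_ [_ [ker _]]] /ker [s [hs e]].
by case: (Adom e) => // s0; rewrite s0 in hs.
Qed.

Lemma localization_domain : is_domain B.
Proof.
case: hloc => unit [rf _].
exact: frac_domain (rmorphD phi) (rmorphM phi) localization_inj0 unit rf Adom.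
Qed.

Lemma localization_left :
  (noetherian (@lmul A) -> noetherian (@lmul B)) /\
  (left_ore A -> left_ore B) /\
  ((forall I, is_ideal (@lmul A) I -> stably_free (@lmul A) I) ->
     forall J, is_ideal (@lmul B) J -> stably_free (@lmul B) J) /\
  ((forall I, is_ideal (@lmul A) I -> fin_gen (@lmul A) I -> stably_free (@lmul A) I) ->
     forall J, is_ideal (@lmul B) J -> fin_gen (@lmul B) J -> stably_free (@lmul B) J).
Proof.
case: hS => [S1 [S_mul [_ [S_lore _]]]]; case: hloc => [unit [rf [lf _]]].
exact: left_fraction_transfer (rmorphD phi) (rmorphM phi) localization_inj0
  S1 S_mul S_lore unit lf rf.
Qed.

(* The right-sided properties are the left-sided ones of the converse
   localization A^c -> B^c. *)
Lemma localization_right :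
  (noetherian (@rmul A) -> noetherian (@rmul B)) /\
  (right_ore A -> right_ore B) /\
  ((forall I, is_ideal (@rmul A) I -> stably_free (@rmul A) I) ->
     forall J, is_ideal (@rmul B) J -> stably_free (@rmul B) J) /\
  ((forall I, is_ideal (@rmul A) I -> fin_gen (@rmul A) I -> stably_free (@rmul A) I) ->
     forall J, is_ideal (@rmul B) J -> fin_gen (@rmul B) J -> stably_free (@rmul B) J).
Proof.
case: hS => [S1 [S_mul [S_rore _]]]; case: hloc => [unit [rf [lf _]]].
have := @left_fraction_transfer A^c B^c S phi (rmorphD phi)
  (fun x y => rmorphM phi y x) localization_inj0 S1
  (fun s t hs ht => S_mul t s ht hs) S_rore.
apply=> [s /unit [u [e1 e2]]||]; [by exists u | exact: rf | exact: lf].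
Qed.

End Localization.

Theorem mainTheorem10 (A : nzRingType) (S : A -> Prop)
    (hS : two_sided_denominator_set S) (h0 : ~ S 0)
    (B : nzRingType) (phi : {rmorphism A -> B})
    (hloc : is_localization S phi) :
  (stably_free_ideal_domain A -> stably_free_ideal_domain B) /\
  (semistably_free_ideal_domain A -> semistably_free_ideal_domain B).
Proof.
split.
- move=> [Adom [NL [NR [SL SR]]]].
  have [N1 [_ [SF1 _]]] := localization_left hS h0 hloc Adom.
  have [N2 [_ [SF2 _]]] := localization_right hS h0 hloc Adom.
  split; first exact: localization_domain h0 hloc Adom.
  by split; [exact: N1 | split; [exact: N2 | split; [exact: SF1 | exact: SF2]]].
- move=> [Adom [OL [OR [SL SR]]]].
  have [_ [O1 [_ SF1]]] := localization_left hS h0 hloc Adom.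
  have [_ [O2 [_ SF2]]] := localization_right hS h0 hloc Adom.
  split; first exact: localization_domain h0 hloc Adom.
  by split; [exact: O1 | split; [exact: O2 | split; [exact: SF1 | exact: SF2]]].
Qed.
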